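(* Let $(\mathrm{Con},\sqsubseteq,(s_i)_{i\in G})$ be a spatial constraint system with distributed spaces $(\Delta_I)_{I\subseteq G}$. Then: (1) $(\Delta_I)_{I\subseteq G}$ is a group distribution candidate; (2) if $(d_I)_{I\subseteq G}$ is any group distribution candidate, then $d_I\preceq \Delta_I$ for every $I\subseteq G$.
   Context: A constraint system (cs) is a complete lattice $(\mathrm{Con},\sqsubseteq)$, with join $\sqcup$, meet $\sqcap$, bottom $\mathit{true}$ and top $\mathit{false}$; $d\sqsupseteq c$ means $c\sqsubseteq d$. A space function over the cs is a self-map $f:\mathrm{Con}\to\mathrm{Con}$ that is continuous (preserves the join of every directed set) and satisfies $f(\mathit{true})=\mathit{true}$ and $f(c\sqcup d)=f(c)\sqcup f(d)$ for all $c,d$. Let $\mathcal{S}(\mathrm{Con})$ be the set of space functions, ordered pointwise: $f\preceq g$ iff $f(c)\sqsubseteq g(c)$ for all $c\in\mathrm{Con}$. A spatial constraint system (scs) $(\mathrm{Con},\sqsubseteq,(s_i)_{i\in G})$ is a cs together with a family of space functions $s_i$ indexed by an arbitrary (possibly infinite) set $G$ of agents. Its distributed spaces are $\Delta_I=\max\{f\in\mathcal{S}(\mathrm{Con}) : f\preceq s_i \text{ for every } i\in I\}$ for $I\subseteq G$ (this greatest element exists). A group distribution candidate is a family $(d_I)_{I\subseteq G}$ of self-maps on $\mathrm{Con}$ such that for all $I,J\subseteq G$: (D.1) $d_I$ is a space function; (D.2) $d_I=s_i$ if $I=\{i\}$; (D.3) $d_J\preceq d_I$ whenever $I\subseteq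 J$. *)

Record complete_lattice := CompleteLattice {
  car :> Type;
  leq : car -> car -> Prop;
  leq_refl : forall c, leq c c;
  leq_trans : forall a b c, leq a b -> leq b c -> leq a c;
  leq_antisym : forall a b, leq a b -> leq b a -> a = b;
  lub : (car -> Prop) -> car;
  lub_ub : forall (S : car -> Prop) c, S c -> leq c (lub S);
  lub_least : forall (S : car -> Prop) d, (forall c, S c -> leq c d) -> leq (lub S) d
}.

Arguments leq {c0} _ _.
Arguments lub {c0} _.

Section CS.
Variable Con : complete_lattice.

Definition join (c d : Con) : Con := lub (fun x => x = c \/ x = d).
Definition ctrue : Con := lub (fun _ => False).

Definition directed (D : Con -> Prop) : Prop :=
  (exists c, D c) /\
  (forall a b, D a -> D b -> exists c, D c /\ leq a c /\ leq b c).

Definition img (f : Con -> Con) (D : Con -> Prop) : Con -> Prop :=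
  fun y => exists x, D x /\ y = f x.

Definition space_function (f : Con -> Con) : Prop :=
  (forall D, directed D -> f (lub D) = lub (img f D)) /\
  f ctrue = ctrue /\
  (forall c d, f (join c d) = join (f c) (f d)).

Definition fle (f g : Con -> Con) : Prop := forall c, leq (f c) (g c).

Variable G : Type.

Definition distributed_spaces (s : G -> Con -> Con)
    (Delta : (G -> Prop) -> Con -> Con) : Prop :=
  forall I : G -> Prop,
    (space_function (Delta I) /\ (forall i, I i -> fle (Delta I) (s i))) /\
    (forall f, space_function f -> (forall i, I i -> fle f (s i)) -> fle f (Delta I)).

Definition group_distribution_candidate (s : G -> Con -> Con)
    (d : (G -> Prop) -> Con -> Con) : Prop :=
  (forall I, space_function (d I)) /\
  (forall (I : G -> Prop) (i : G), (forall j, I j <-> j = i) -> d I = s i) /\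
  (forall I J : G -> Prop, (forall j, I j -> J j) -> fle (d J) (d I)).

End CS.

From Stdlib Require Import FunctionalExtensionality.

(* Everything follows from the defining property of Δ_I as the greatest space
   function below all s_i, i ∈ I: s_i itself is such a function for I = {i}, so
   Δ_{i} = s_i; enlarging I adds constraints, so Δ is antitone; and a candidate
   satisfies d_I ⪯ d_{i} = s_i for every i ∈ I, hence d_I ⪯ Δ_I. *)

Section PointwiseOrder.
Variable Con : complete_lattice.

Lemma fle_refl (f : Con -> Con) : fle Con f f.
Proof. intro c. apply leq_refl. Qed.

Lemma fle_antisym (f g : Con -> Con) : fle Con f g -> fle Con g f -> f = g.
Proof.
  intros Hfg Hgf. apply functional_extensionality. intro c.
  exact (leq_antisym _ _ _ (Hfg c) (Hgf c)).
Qed.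

End PointwiseOrder.

Section DistributedSpaces.
Variables (Con : complete_lattice) (G : Type) (s : G -> Con -> Con).
Variable Delta : (G -> Prop) -> Con -> Con.
Hypothesis HDelta : distributed_spaces Con G s Delta.

Lemma distributed_space_function (I : G -> Prop) : space_function Con (Delta I).
Proof. exact (proj1 (proj1 (HDelta I))). Qed.

Lemma distributed_le_space (I : G -> Prop) (i : G) : I i -> fle Con (Delta I) (s i).
Proof. exact (proj2 (proj1 (HDelta I)) i). Qed.

Lemma distributed_greatest (I : G -> Prop) (f : Con -> Con) :
  space_function Con f -> (forall i, I i -> fle Con f (s i)) -> fle Con f (Delta I).
Proof. exact (proj2 (HDelta I) f). Qed.

Lemma distributed_antitone (I J : G -> Prop) :
  (forall j, I j -> J j) -> fle Con (Delta J) (Delta I).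
Proof.
  intros HIJ. apply distributed_greatest; [apply distributed_space_function |].
  intros i Hi. apply distributed_le_space, HIJ, Hi.
Qed.

Lemma distributed_singleton (I : G -> Prop) (i : G) :
  space_function Con (s i) -> (forall j, I j <-> j = i) -> Delta I = s i.
Proof.
  intros Hsi HI. apply fle_antisym.
  - apply distributed_le_space, HI. reflexivity.
  - apply distributed_greatest; [exact Hsi |].
    intros j Hj. apply HI in Hj. subst j. apply fle_refl.
Qed.

Lemma distributed_spaces_candidate :
  (forall i, space_function Con (s i)) -> group_distribution_candidate Con G s Delta.
Proof.
  intros Hs. split; [| split].
  - exact distributed_space_function.
  - intros I i. exact (distributed_singleton I i (Hs i)).
  - exact distributed_antitone.
Qed.

End DistributedSpaces.

Section Candidates.
Variables (Con : complete_lattice) (G : Type) (s : G -> Con -> Con).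
Variable d : (G -> Prop) -> Con -> Con.
Hypothesis Hd : group_distribution_candidate Con G s d.

Lemma candidate_le_space (I : G -> Prop) (i : G) : I i -> fle Con (d I) (s i).
Proof.
  destruct Hd as [_ [Hsingleton Hantitone]]. intros Hi.
  rewrite <- (Hsingleton (fun j => j = i) i (fun j => iff_refl (j = i))).
  apply Hantitone. intros j Hj. subst j. exact Hi.
Qed.

Lemma candidate_le_distributed (Delta : (G -> Prop) -> Con -> Con) (I : G -> Prop) :
  distributed_spaces Con G s Delta -> fle Con (d I) (Delta I).
Proof.
  intros HDelta. apply (distributed_greatest _ _ _ _ HDelta); [apply (proj1 Hd) |].
  exact (candidate_le_space I).
Qed.

End Candidates.

Theorem mainTheorem1 (Con : complete_lattice) (G : Type)
    (s : G -> Con -> Con)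
    (Hs : forall i, space_function Con (s i))
    (Delta : (G -> Prop) -> Con -> Con)
    (HDelta : distributed_spaces Con G s Delta) :
  group_distribution_candidate Con G s Delta /\
  (forall d, group_distribution_candidate Con G s d ->
     forall I : G -> Prop, fle Con (d I) (Delta I)).
Proof.
  split.
  - exact (distributed_spaces_candidate Con G s Delta HDelta Hs).
  - intros d Hd I. exact (candidate_le_distributed Con G s d Hd Delta I HDelta).
Qed.
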